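(* Let $R$ be a noncommutative division algebra over a field $F$, let $n\geq 2$ be an integer, and let $p\in F[x]$ be a nonconstant polynomial. Then there exist $A,B\in\mathrm{M}_n(R)$ such that $\mathrm{trace}\big(p(AB)-p(BA)\big)\neq 0$.
   Context: For a matrix $X\in \mathrm{M}_n(R)$, $\mathrm{trace}(X)$ denotes the sum of its diagonal entries (an element of $R$). *)

From HB Require Import structures.
From mathcomp Require Import all_boot all_order all_algebra.
Set Implicit Arguments. Unset Strict Implicit. Unset Printing Implicit Defensive.
Import GRing.Theory.
Local Open Scope ring_scope.

Definition mx_peval (F : fieldType) (R : algType F) (n : nat)
    (p : {poly F}) (M : 'M[R]_n) : 'M[R]_n :=
  \sum_(i < size p) ((p`_i)%:A)%:M *m M ^+ i.

Definition is_division_algebra (F : fieldType) (R : unitAlgType F) : Prop :=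
  forall x : R, x != 0 -> x \is a GRing.unit.

From HB Require Import structures.
From mathcomp Require Import all_boot all_order all_algebra finfield.
From Stdlib Require Import Classical_Prop.
Set Implicit Arguments. Unset Strict Implicit. Unset Printing Implicit Defensive.
Import GRing.Theory.
Local Open Scope ring_scope.

(* Let A have first column (1, x, 0, ..., 0) and B first row
   (s - c x, c, 0, ..., 0), all other entries being 0.  Then BA = s E_11 and
   tr((AB)^(k+1)) - tr((BA)^(k+1)) = x s^k c - s^k c x, so that
   tr(p(AB) - p(BA)) = x h c - h c x with h = q(s), q = (p - p(0)) / X.
   Choosing c = h^-1 y with xy <> yx makes this nonzero, provided q(s) <> 0
   for some s in R.
   If instead every element of R were a root of q, then F would be finite
   and so would every F[z].  Following Herstein's proof of Jacobson's
   theorem, the operator T v = v x satisfies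
   prod_(c in F[x]) (T - c) = T^|F[x]| - T, which kills y while T - x does
   not; hence b x = l b for some b <> 0 and l in F[x] with l <> x.  Then b
   has finite order and normalises F[x], so F[x][b] is a finite domain,
   commutative by Wedderburn's theorem, contradicting b x <> x b. *)

Section RightMultiplicationOperator.

Variables (R : nzRingType) (x : R).

(* [(P * v%:P).[x]] is [\sum_i P_i v x^i]: the polynomial [P] evaluated at
   the operator [v |-> v x], its coefficients acting on the left. *)

Lemma horner_mulXsubC_polyC (P : {poly R}) c v :
  (P * ('X - c%:P) * v%:P).[x] = (P * (v * x - c * v)%:P).[x].
Proof.
have Mx (Q : {poly R}) : (Q * (v * x)%:P).[x] = (Q * v%:P).[x] * x.
  by rewrite polyCM mulrA hornerM_comm ?hornerC // /comm_poly hornerC.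
rewrite mulrBr mulrBl -mulrA -commr_polyX mulrA hornerD hornerMX -Mx.
by rewrite -mulrA -polyCM polyCB mulrBr hornerD !hornerN.
Qed.

Lemma hornerXn_mul_polyC k v : ('X^k * v%:P).[x] = v * x ^+ k.
Proof. by rewrite -commr_polyXn hornerCM hornerXn. Qed.

Lemma horner_prod_XsubC_polyC_eq0 (I : eqType) (r : seq I) (F : I -> R) v :
    v != 0 -> ((\prod_(i <- r) ('X - (F i)%:P)) * v%:P).[x] = 0 ->
  exists2 i, i \in r & exists2 b, b != 0 & b * x = F i * b.
Proof.
elim/last_ind: r v => [|r i IHr] v v_neq0.
  by rewrite big_nil mul1r hornerC => v0; rewrite v0 eqxx in v_neq0.
rewrite big_rcons /= horner_mulXsubC_polyC.
have [v'0 _ | v'_neq0 /(IHr _ v'_neq0) [j r_j eig]] := eqVneq (v * x - F i * v) 0.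
  exists i; first by rewrite mem_rcons mem_head.
  by exists v => //; apply/eqP; rewrite -subr_eq0 v'0.
by exists j => //; rewrite mem_rcons in_cons r_j orbT.
Qed.

End RightMultiplicationOperator.

Section FiniteSubring.

Variables (R : nzRingType) (w : seq R).
Hypotheses (w_subring : subring_closed [in w]) (R_dom : GRing.integral_domain_axiom R).

Definition in_fin_subring : {pred R} := [in w].
HB.instance Definition _ :=
  GRing.isSubringClosed.Build R in_fin_subring w_subring.

Record fin_subring := FinSubring {
  fin_subring_val : R;
  _ : fin_subring_val \in in_fin_subring }.

HB.instance Definition _ := [isSub for fin_subring_val].

Definition seq_sub_of_fin_subring (a : fin_subring) : seq_sub w :=
  SeqSub (valP a).
Definition fin_subring_of_seq_sub (a : seq_sub w) : fin_subring :=
  FinSubring (ssvalP a).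
Lemma seq_sub_of_fin_subringK : cancel seq_sub_of_fin_subring fin_subring_of_seq_sub.
Proof. by move=> a; apply: val_inj. Qed.

HB.instance Definition _ := Finite.copy fin_subring (can_type seq_sub_of_fin_subringK).
HB.instance Definition _ := [SubChoice_isSubNzRing of fin_subring by <:].
HB.instance Definition _ := FinRing.isNzRing.Build fin_subring.

Fact fin_subring_dom : GRing.integral_domain_axiom fin_subring.
Proof.
move=> a b /(congr1 val); rewrite rmorphM rmorph0 => /R_dom.
by rewrite -!(inj_eq val_inj) rmorph0.
Qed.

HB.instance Definition _ :=
  GRing.PzRing_hasCommutativeMul.Build fin_subring (finDomain_mulrC fin_subring_dom).
HB.instance Definition _ :=
  GRing.ComUnitRing_isField.Build fin_subring (finDomain_field fin_subring_dom).

(* [/=] unfolds [val] to [fin_subring_val], which must then still be known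
   to be a ring morphism. *)
HB.instance Definition _ := GRing.RMorphism.copy fin_subring_val val.

Lemma fin_subring_mulrC a b : a \in w -> b \in w -> a * b = b * a.
Proof.
move=> wa wb; have := mulrC (FinSubring wa : fin_subring) (FinSubring wb).
by move/(congr1 val); rewrite !rmorphM.
Qed.

Lemma fin_subring_eigen x y : x \in w -> x * y != y * x ->
  exists b l, [/\ b != 0, l \in w, l != x & b * x = l * b].
Proof.
move=> w_x xy_neq_yx; pose xK : fin_subring := FinSubring w_x.
pose k := #|{: fin_subring}|.
have x_fixed : x ^+ k = x by rewrite -[x]/(val xK) -rmorphXn expf_card.
have : 'X^k - 'X = \prod_(c | c != xK) ('X - c%:P) * ('X - xK%:P).
  by rewrite finField_genPoly (bigD1 xK) //= mulrC.
move/(congr1 (fun P => (map_poly val P * y%:P).[x])).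
rewrite rmorphB rmorphM /= map_polyXn map_polyX map_polyXsubC map_prod_XsubC.
rewrite -big_filter mulrBl hornerD hornerN -{2}(expr1 'X) !hornerXn_mul_polyC.
rewrite x_fixed expr1 subrr horner_mulXsubC_polyC.
move=> /esym /horner_prod_XsubC_polyC_eq0.
case=> [|l]; first by rewrite subr_eq0 eq_sym.
rewrite mem_filter => /andP[l_neq_xK _] [b b_neq0 eig].
(* [l != xK] is convertible to [val l != x]. *)
by exists b, (val l); split=> //; apply: valP.
Qed.

End FiniteSubring.

Section LinearCombinations.

Variables (R : nzRingType) (L : seq R) (m : nat) (g : 'I_m -> R).

Definition lincombs : seq R :=
  [seq \sum_i ssval (f i) * g i | f : {ffun 'I_m -> seq_sub L}].

Lemma lincombs_sum (c : 'I_m -> R) :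
  (forall i, c i \in L) -> \sum_i c i * g i \in lincombs.
Proof.
move=> L_c; apply/imageP; exists [ffun i => SeqSub (L_c i)] => //.
by apply: eq_bigr => i _; rewrite ffunE.
Qed.

Lemma lincombsP z : z \in lincombs ->
  exists2 c : 'I_m -> R, forall i, c i \in L & z = \sum_i c i * g i.
Proof.
by case/imageP=> f _ ->; exists (fun i => ssval (f i)) => // i; apply: ssvalP.
Qed.

Lemma lincombs_zmod_closed : zmod_closed [in L] -> zmod_closed [in lincombs].
Proof.
case=> L_0 L_B; split.
  have -> : 0 = \sum_i 0 * g i by rewrite big1 // => i _; rewrite mul0r.
  exact: lincombs_sum.
move=> _ _ /lincombsP[c L_c ->] /lincombsP[d L_d ->].
rewrite -sumrB; under eq_bigr do rewrite -mulrBl.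
by apply: lincombs_sum => i; apply: L_B.
Qed.

End LinearCombinations.

Section PowerSpan.

Variables (R : nzRingType) (K : seq R) (b : R) (m : nat).
Hypotheses (K_subring : subring_closed [in K]) (m_gt0 : (0 < m)%N) (b_m : b ^+ m = 1).
Hypothesis b_normalizes : forall k, k \in K -> exists2 k', k' \in K & b * k = k' * b.

Local Notation W := (lincombs K (fun i : 'I_m => b ^+ i)).

Let K_zmod : zmod_closed [in K] := GRing.subring_closedB K_subring.
Let K_1 : 1 \in K. Proof. by case: K_subring. Qed.
Let K_M : GRing.mulr_2closed [in K]. Proof. by case: K_subring. Qed.

Lemma expr_normalizes i k : k \in K -> exists2 k', k' \in K & b ^+ i * k = k' * b ^+ i.
Proof.
elim: i k => [|i IHi] k K_k; first by exists k; rewrite // expr0 mul1r mulr1.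
have [k1 K_k1 bk] := b_normalizes K_k; have [k' K_k' bik1] := IHi _ K_k1.
by exists k' => //; rewrite exprSr -mulrA bk mulrA bik1 -mulrA -exprSr.
Qed.

Lemma lincombs_expr k j : k \in K -> k * b ^+ j \in W.
Proof.
move=> K_k; pose j' := Ordinal (ltn_pmod j m_gt0).
have -> : b ^+ j = b ^+ j'.
  by rewrite /= {1}(divn_eq j m) exprD mulnC exprM b_m expr1n mul1r.
have -> : k * b ^+ j' = \sum_i (if i == j' then k else 0) * b ^+ i.
  by rewrite (bigD1 j') //= eqxx big1 ?addr0 // => i /negPf->; rewrite mul0r.
by apply: lincombs_sum => i; case: ifP => _ //; case: K_zmod.
Qed.

Lemma lincombs_expr_subring : subring_closed [in W].
Proof.
have W_zmod : zmod_closed [in W] := lincombs_zmod_closed _ K_zmod.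
have [W_0 W_D] := GRing.zmod_closedD W_zmod.
have W_sum (I : finType) (f : I -> R) : (forall i, f i \in W) -> \sum_i f i \in W.
  by move=> W_f; apply: (big_ind [in W]).
split; [by rewrite -[1]mulr1 -(expr0 b) lincombs_expr | by case: W_zmod |].
move=> _ _ /lincombsP[c K_c ->] /lincombsP[d K_d ->].
rewrite mulr_suml; apply: (W_sum) => i; rewrite mulr_sumr; apply: (W_sum) => j.
have [k' K_k' bik] := expr_normalizes i (K_d j).
by rewrite -mulrA (mulrA (b ^+ i)) bik -!mulrA -exprD mulrA lincombs_expr // K_M.
Qed.

End PowerSpan.

Lemma unit_expr_eq1 (R : unitRingType) (s : seq R) (u : R) :
    u \is a GRing.unit -> (forall i, u ^+ i \in s) ->
  exists2 m, (0 < m)%N & u ^+ m = 1.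
Proof.
move=> u_unit s_u; pose us := [seq u ^+ i | i <- iota 0 (size s).+1].
have us_sub : {subset us <= s} by move=> _ /mapP[i _ ->].
have : ~~ uniq us.
  by apply/negP => /uniq_leq_size/(_ us_sub); rewrite size_map size_iota ltnn.
case/(uniqPn 0) => i [j [lt_ij]]; rewrite size_map size_iota => lt_j.
have lt_i := ltn_trans lt_ij lt_j.
rewrite !(nth_map 0%N) ?size_iota // !nth_iota // !add0n => eq_ij.
exists (j - i)%N; first by rewrite subn_gt0.
apply: (mulrI (unitrX i u_unit)).
by rewrite -exprD subnKC ?(ltnW lt_ij) // mulr1.
Qed.

Lemma division_algebra_dom (F : fieldType) (R : unitAlgType F) :
  is_division_algebra R -> GRing.integral_domain_axiom R.
Proof.
move=> R_div a b ab0; have [// | /R_div a_unit] := eqVneq a 0.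
by apply/orP; right; rewrite -(mulKr a_unit b) ab0 mulr0.
Qed.

Lemma finite_of_all_roots (F : idomainType) (q : {poly F}) :
  q != 0 -> (forall c, root q c) -> exists s : seq F, forall c, c \in s.
Proof.
move=> q_neq0 q_root; apply: NNPP => no_enum.
have uniq_of_size k : exists2 s : seq F, uniq s & size s = k.
  elim: k => [|k [s s_uniq <-]]; first by exists [::].
  have [c c_notin_s] : exists c, c \notin s.
    apply: NNPP => all_in; apply: no_enum; exists s => c.
    by apply/negPn/negP => c_notin_s; apply: all_in; exists c.
  by exists (c :: s); rewrite /= ?c_notin_s.
have [s s_uniq s_size] := uniq_of_size (size q).
have /allP/(max_poly_roots q_neq0) := fun c (_ : c \in s) => q_root c.
by rewrite s_uniq s_size ltnn => /(_ isT).
Qed.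

Section HornerAlg.

Variables (F : fieldType) (A : algType F).

Lemma horner_alg_wide (z : A) (h : {poly F}) n : (size h <= n)%N ->
  horner_alg z h = \sum_(i < n) (h`_i)%:A * z ^+ i.
Proof.
move=> le_h_n; rewrite /horner_alg /horner_morph (horner_coef_wide _ (_ : _ <= n)%N).
  by apply: eq_bigr => i _; rewrite coef_map.
by rewrite size_map_poly.
Qed.

Lemma horner_alg_in_alg (c : F) (h : {poly F}) : horner_alg (c%:A : A) h = (h.[c])%:A.
Proof. by rewrite /horner_alg /horner_morph horner_map. Qed.

Lemma horner_alg_conj (b x l : A) (h : {poly F}) :
  b * x = l * b -> b * horner_alg x h = horner_alg l h * b.
Proof.
move=> bx_lb; elim/poly_ind: h => [|h c IHh]; first by rewrite !rmorph0 mulr0 mul0r.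
rewrite !rmorphD !rmorphM /= !horner_algX !horner_algC mulrDr mulrDl.
by rewrite mulrA IHh -!mulrA bx_lb comm_alg.
Qed.

Lemma horner_alg_closed (S : {pred A}) (l : A) (h : {poly F}) : subring_closed S ->
  (forall c, c%:A \in S) -> l \in S -> horner_alg l h \in S.
Proof.
move=> S_ring S_F S_l; have [_ _ S_M] := S_ring.
have [S_0 S_D] := GRing.zmod_closedD (GRing.subring_closedB S_ring).
elim/poly_ind: h => [|h c IHh]; first by rewrite rmorph0.
by rewrite rmorphD rmorphM /= horner_algX horner_algC S_D ?S_M.
Qed.

End HornerAlg.

Section AlgebraicDivisionAlgebra.

Variables (F : fieldType) (R : unitAlgType F) (q : {poly F}) (eF : seq F).
Hypotheses (R_div : is_division_algebra R) (q_neq0 : q != 0).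
Hypotheses (q_root : forall z : R, horner_alg z q = 0) (eF_full : forall c, c \in eF).

Definition poly_span (z : R) : seq R :=
  lincombs (map (in_alg R) eF) (fun i : 'I_(size q).-1 => z ^+ i).

Lemma mem_poly_span z h : horner_alg z h \in poly_span z.
Proof.
have -> : horner_alg z h = horner_alg z (h %% q).
  by rewrite {1}(divp_eq h q) rmorphD rmorphM /= q_root mulr0 add0r.
have le_hq : (size (h %% q)%R <= (size q).-1)%N.
  by rewrite -ltnS prednK ?ltn_modpN0 // size_poly_gt0.
by rewrite (horner_alg_wide _ le_hq); apply: lincombs_sum => i; apply: map_f.
Qed.

Lemma poly_spanP z k : k \in poly_span z -> exists h, k = horner_alg z h.
Proof.
case/lincombsP=> c F_c ->.
apply: (big_ind (fun k => exists h, k = horner_alg z h)) => [|_ _ [h1 ->] [h2 ->]|i _].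
- by exists 0; rewrite rmorph0.
- by exists (h1 + h2); rewrite rmorphD.
have /mapP[a _ ->] := F_c i.
by exists (a%:P * 'X^i); rewrite rmorphM rmorphXn /= horner_algC horner_algX.
Qed.

Lemma poly_span_subring z : subring_closed [in poly_span z].
Proof.
split; first by rewrite -(rmorph1 (horner_alg z)) mem_poly_span.
  by move=> _ _ /poly_spanP[h1 ->] /poly_spanP[h2 ->]; rewrite -rmorphB mem_poly_span.
by move=> _ _ /poly_spanP[h1 ->] /poly_spanP[h2 ->]; rewrite -rmorphM mem_poly_span.
Qed.

Lemma algebraic_division_algebra_mulrC (x y : R) : x * y = y * x.
Proof.
apply/eqP/negPn/negP => xy_neq_yx.
have R_dom := division_algebra_dom R_div.
have K_x : x \in poly_span x by rewrite -[x in x \in _]horner_algX mem_poly_span.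
have [b [l [b_neq0 K_l l_neq_x bx_lb]]] :=
  fin_subring_eigen (poly_span_subring x) R_dom K_x xy_neq_yx.
have [m m_gt0 b_m] : exists2 m, (0 < m)%N & b ^+ m = 1.
  apply: (unit_expr_eq1 (s := poly_span b) (R_div b_neq0)) => i.
  by have := mem_poly_span b 'X^i; rewrite rmorphXn /= horner_algX.
have b_normalizes k : k \in poly_span x ->
    exists2 k', k' \in poly_span x & b * k = k' * b.
  case/poly_spanP=> h ->; exists (horner_alg l h); last exact: horner_alg_conj.
  apply: horner_alg_closed (poly_span_subring x) _ K_l => c.
  by rewrite -(horner_algC x) mem_poly_span.
have W_subring := lincombs_expr_subring (poly_span_subring x) m_gt0 b_m b_normalizes.
have W_mem := lincombs_expr (poly_span_subring x) m_gt0 b_m.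
have K_1 : 1 \in poly_span x by case: (poly_span_subring x).
have := fin_subring_mulrC W_subring R_dom (W_mem 1 1%N K_1) (W_mem x 0%N K_x).
rewrite mul1r expr1 expr0 mulr1 bx_lb => /eqP; rewrite -subr_eq0 -mulrBl.
by move/eqP/R_dom; rewrite (negPf b_neq0) orbF subr_eq0 (negPf l_neq_x).
Qed.

End AlgebraicDivisionAlgebra.

Lemma exists_horner_alg_neq0 (F : fieldType) (R : unitAlgType F) (q : {poly F}) :
    is_division_algebra R -> (exists x y : R, x * y != y * x) -> q != 0 ->
  exists s : R, horner_alg s q != 0.
Proof.
move=> R_div [x [y xy_neq_yx]] q_neq0; apply: NNPP => no_nonroot.
have q_root (s : R) : horner_alg s q = 0.
  by apply/eqP/negPn/negP => q_s_neq0; apply: no_nonroot; exists s.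
have [eF eF_full] : exists eF : seq F, forall c, c \in eF.
  apply: finite_of_all_roots q_neq0 _ => c; have := q_root c%:A.
  by rewrite horner_alg_in_alg => /eqP; rewrite scaler_eq0 oner_eq0 orbF.
have := algebraic_division_algebra_mulrC R_div q_neq0 q_root eF_full x y.
by move/eqP; rewrite (negPf xy_neq_yx).
Qed.

Section FirstColumnRow.

Variable R : pzRingType.

Lemma mulmx_exprS m n (A : 'M[R]_(m, n)) (B : 'M_(n, m)) k :
  (A *m B) ^+ k.+1 = A *m (B *m A) ^+ k *m B.
Proof.
elim: k => [|k IHk]; first by rewrite expr1 expr0 mulmx1.
by rewrite exprS IHk [in RHS]exprS -!mulmxE !mulmxA.
Qed.

Lemma mxtrace_mul_scalar n (u : 'cV[R]_n) (v : 'rV[R]_n) t :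
  \tr (u *m t%:M *m v) = \sum_i u i 0 * t * v 0 i.
Proof.
apply: eq_bigr => i _; rewrite !mxE big_ord1 !mxE big_ord1 !mxE.
by rewrite eqxx mulr1n.
Qed.

Variable n : nat.

Definition first_col_mx (u : 'cV[R]_n.+1) : 'M_n.+1 := u *m delta_mx 0 0.
Definition first_row_mx (v : 'rV[R]_n.+1) : 'M_n.+1 := delta_mx 0 0 *m v.

Variables (u : 'cV[R]_n.+1) (v : 'rV[R]_n.+1).
Let s := (v *m u) 0 0.

Let delta_mul_delta : (delta_mx 0 0 : 'rV[R]_n.+1) *m delta_mx 0 0 = 1.
Proof. by rewrite mul_delta_mx; apply/matrixP => i j; rewrite !ord1 !mxE. Qed.

Let expr_mul_row_col k : (v *m u) ^+ k = (s ^+ k)%:M.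
Proof. by rewrite [v *m u]mx11_scalar rmorphXn. Qed.

Lemma mxtrace_first_col_row_exprS k :
  \tr ((first_col_mx u *m first_row_mx v) ^+ k.+1) = \sum_i u i 0 * s ^+ k * v 0 i.
Proof.
rewrite /first_col_mx /first_row_mx -mulmxA (mulmxA (delta_mx 0 0)) delta_mul_delta.
by rewrite mul1mx mulmx_exprS expr_mul_row_col mxtrace_mul_scalar.
Qed.

Lemma mxtrace_first_row_col_exprS k :
  \tr ((first_row_mx v *m first_col_mx u) ^+ k.+1) = s ^+ k.+1.
Proof.
rewrite /first_col_mx /first_row_mx !mulmxA mulmx_exprS !mulmxA delta_mul_delta mul1mx.
rewrite -(mulmxA _ v u) -(mulmxA _ (v *m u)) mulmxE -exprS expr_mul_row_col.
rewrite mxtrace_mul_scalar (bigD1 0) //= big1 ?addr0 => [|i /negPf i_neq0].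
  by rewrite !mxE !eqxx mul1r mulr1.
by rewrite !mxE i_neq0 andbF mulr0.
Qed.

End FirstColumnRow.

Lemma sum_nth_pair (R : nzRingType) n (f : R -> R -> R) a0 a1 b0 b1 : f 0 0 = 0 ->
  \sum_(i < n.+2) f [:: a0; a1]`_i [:: b0; b1]`_i = f a0 b0 + f a1 b1.
Proof.
move=> f00; rewrite 2!big_ord_recl big1 ?addr0 // => i _.
by rewrite !nth_default.
Qed.

Lemma mxtrace_peval (F : fieldType) (R : algType F) n (p : {poly F}) (M : 'M[R]_n) :
  \tr (mx_peval p M) = \sum_(i < size p) (p`_i)%:A * \tr (M ^+ i).
Proof.
by rewrite raddf_sum; apply: eq_bigr => i _; rewrite /= mul_scalar_mx mxtraceZ.
Qed.

Section CommutatorTrace.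

Variables (F : fieldType) (R : algType F) (n : nat) (x s c : R).

Let u : 'cV[R]_n.+2 := \col_i [:: 1; x]`_i.
Let v : 'rV[R]_n.+2 := \row_i [:: s - c * x; c]`_i.
Let A := first_col_mx u.
Let B := first_row_mx v.

Lemma mxtrace_exprS_commutator k :
  \tr ((A *m B) ^+ k.+1) - \tr ((B *m A) ^+ k.+1) = x * s ^+ k * c - s ^+ k * c * x.
Proof.
rewrite mxtrace_first_col_row_exprS mxtrace_first_row_col_exprS.
have -> : (v *m u) 0 0 = s.
  rewrite mxE; under eq_bigr do rewrite !mxE.
  by rewrite (@sum_nth_pair _ _ *%R) ?mulr0 // mulr1 subrK.
under eq_bigr do rewrite !mxE.
rewrite (@sum_nth_pair _ _ (fun a b => a * s ^+ k * b)) ?mul0r //.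
by rewrite mul1r exprSr mulrBr addrAC [_ - s ^+ k * s]addrAC subrr add0r addrC mulrA.
Qed.

Lemma mxtrace_peval_commutator (p : {poly F}) :
  let h := horner_alg s (drop_poly 1 p) in
  \tr (mx_peval p (A *m B) - mx_peval p (B *m A)) = x * h * c - h * c * x.
Proof.
rewrite raddfB /= !mxtrace_peval -sumrB.
rewrite (horner_alg_wide _ (_ : size (drop_poly 1 p) <= (size p).-1)%N); last first.
  by rewrite size_drop_poly subn1.
case: (size p) => [|N] /=; first by rewrite !big_ord0 !(mulr0, mul0r) subrr.
rewrite big_ord_recl !expr0 subrr add0r.
rewrite mulr_sumr !mulr_suml -sumrB; apply: eq_bigr => i _.
rewrite -mulrBr lift0 mxtrace_exprS_commutator coef_drop_poly addn1.
by rewrite mulrBr !mulrA -!comm_alg.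
Qed.

End CommutatorTrace.

Theorem theorem3p1 (F : fieldType) (R : unitAlgType F) (n : nat)
  (hdiv : is_division_algebra R)
  (hnc : exists x y : R, x * y != y * x)
  (hn : (2 <= n)%N)
  (p : {poly F}) (hp : (1 < size p)%N) :
  exists A B : 'M[R]_n,
    \tr (mx_peval p (A *m B) - mx_peval p (B *m A)) != 0.
Proof.
case: n hn => [|[|n]] // _.
have q_neq0 : drop_poly 1 p != 0 by rewrite -size_poly_gt0 size_drop_poly subn_gt0.
have [s q_s_neq0] := exists_horner_alg_neq0 hdiv hnc q_neq0.
have [x [y xy_neq_yx]] := hnc.
set h := horner_alg s (drop_poly 1 p) in q_s_neq0.
have h_unit := hdiv h q_s_neq0.
pose c := h^-1 * y.
exists (first_col_mx (\col_i [:: 1; x]`_i)).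
exists (first_row_mx (\row_i [:: s - c * x; c]`_i)).
by rewrite mxtrace_peval_commutator -/h /c !mulrA mulrK // mulrV // mul1r subr_eq0.
Qed.
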